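(* Let $Q(x_1,\ldots,x_q)$ be a polynomial with integer coefficients. For each $i\in\{1,\ldots,q\}$ let $d_i$ be an upper bound on the degree of $x_i$ in $Q$, let $k_i=\lceil\log(d_i+1)\rceil$, and let $K=\sum_{i=1}^q k_i$. Let $p_{1,1},\ldots,p_{1,k_1},\ldots,p_{q,1},\ldots,p_{q,k_q}$ be $K$ distinct primes, and for each $p_{i,j}$ let $b_{i,j}\in\{0,1\}$ be a bit. For each $i$ let $\pi_i=\sum_{j=1}^{k_i}(-1)^{b_{i,j}}\sqrt{p_{i,j}}$. Then $Q(x_1,\ldots,x_q)\not\equiv 0$ (as a polynomial) if and only if $Q(\pi_1,\ldots,\pi_q)\neq 0$.
   Context: All logarithms $\log$ are to base 2. *)

From HB Require Import structures.
From mathcomp Require Import all_boot all_order all_algebra.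
From mathcomp Require Import mpoly.
Set Implicit Arguments. Unset Strict Implicit. Unset Printing Implicit Defensive.
Import Order.TTheory GRing.Theory Num.Theory.
Local Open Scope ring_scope.

Definition deg_bounded (q : nat) (Q : {mpoly int[q]}) (d : 'I_q -> nat) : Prop :=
  forall m, m \in msupp Q -> forall i : 'I_q, (m i <= d i)%N.

(* k = ceil(log2(d+1)) = least e with d+1 <= 2^e *)
Definition klog (d : nat) : nat := up_log 2 d.+1.

Definition pi_val (R : rcfType) (k : nat) (p : 'I_k -> nat) (b : 'I_k -> bool) : R :=
  \sum_(j < k) (-1) ^+ (b j) * Num.sqrt ((p j)%:R).

(* Since the p_ij are distinct primes, sqrt p_ij does not lie in the field F
   generated over Q by the other square roots, so s |-> -s is an automorphism of
   F(s) for s = sqrt p_ij; applying it shows that Q(pi) = 0 forces Q to vanish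
   at every sign pattern.  For each i the
   2^k_i >= d_i + 1 sign patterns give pairwise distinct values of pi_i, so Q
   vanishes on a grid S_1 x ... x S_q with |S_i| > d_i, which forces Q = 0 as
   deg_{x_i} Q <= d_i.  The irrationality statement is proved by induction along
   the tower of quadratic extensions, together with the fact that an element of
   the tower with rational square is a rational multiple of sqrt M for a product
   M of the adjoined primes. *)

From HB Require Import structures.
From mathcomp Require Import all_boot all_order all_algebra.
From mathcomp Require Import mpoly.
From mathcomp Require Import zify ring lra.
Set Implicit Arguments.
Unset Strict Implicit.
Unset Printing Implicit Defensive.

Import Order.TTheory GRing.Theory Num.Theory.
Local Open Scope ring_scope.

Lemma prime_mul_sqr_neq (p M a b : nat) :
  prime p -> ~~ (p %| M)%N -> (0 < a)%N -> (p * a ^ 2 != b ^ 2 * M)%N.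
Proof.
move=> p_pr pNM a_gt0; apply/eqP => E.
have M_gt0 : (0 < M)%N by rewrite lt0n; apply: contraNneq pNM => ->; rewrite dvdn0.
have b_gt0 : (0 < b)%N.
  rewrite lt0n; apply/eqP => b0; move: E; rewrite b0 exp0n // mul0n.
  by have := prime_gt0 p_pr; nia.
have logM : logn p M = 0%N by rewrite lognE (negbTE pNM) !andbF.
have := congr1 (logn p) E.
rewrite !lognM ?expn_gt0 ?(prime_gt0 p_pr) ?a_gt0 ?b_gt0 // logM logn_prime // eqxx.
lia.
Qed.

Lemma prime_neq_rat_sqr_mul (p M : nat) (t : rat) :
  prime p -> ~~ (p %| M)%N -> p%:R != t ^+ 2 * M%:R.
Proof.
move=> p_pr pNM; apply/eqP => E.
have := @prime_mul_sqr_neq p M `|denq t| `|numq t| p_pr pNM.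
rewrite absz_gt0 denq_neq0 => /(_ isT) /eqP[].
have sqr_absz (z : int) : (`|z| ^ 2)%N = z ^+ 2 :> int.
  by rewrite -abszX gez0_abs ?sqr_ge0.
apply/eqP; rewrite -eqz_nat (PoszM p) (PoszM _ M) !sqr_absz; apply/eqP.
apply: (@intr_inj rat); rewrite !rmorphM /= -!pmulrn.
have d_neq0 : (denq t)%:~R != 0 :> rat by rewrite intr_eq0 denq_neq0.
by rewrite -{1}(divq_num_den t) expr_div_n in E; rewrite E; field.
Qed.

Section SqrtField.
Variable R : rcfType.

Definition sqrtn (n : nat) : R := Num.sqrt n%:R.

Lemma sqrtn_sqr n : sqrtn n ^+ 2 = n%:R.
Proof. by rewrite sqr_sqrtr ?ler0n. Qed.

Lemma sqrtnM m n : sqrtn (m * n) = sqrtn m * sqrtn n.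
Proof. by rewrite /sqrtn natrM sqrtrM ?ler0n. Qed.

(* x lies in the field Q(sqrt p | p in ps), built as a tower of quadratic
   extensions; repeated entries of ps are allowed. *)
Fixpoint Qsqrt (ps : seq nat) (x : R) : Prop :=
  if ps is p :: ps' then exists a b, [/\ Qsqrt ps' a, Qsqrt ps' b & x = a + b * sqrtn p]
  else exists r : rat, x = ratr r.

Lemma Qsqrt_rat ps r : Qsqrt ps (ratr r).
Proof.
elim: ps r => [|p ps IH] r /=; first by exists r.
by exists (ratr r), (ratr 0); split; rewrite ?IH // rmorph0 mul0r addr0.
Qed.

Lemma Qsqrt_int ps (z : int) : Qsqrt ps z%:~R.
Proof. by rewrite -(ratr_int R); apply: Qsqrt_rat. Qed.

Lemma Qsqrt_nat ps (n : nat) : Qsqrt ps n%:R.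
Proof. by rewrite -(ratr_nat R); apply: Qsqrt_rat. Qed.

Lemma Qsqrt0 ps : Qsqrt ps 0.
Proof. exact: Qsqrt_nat ps 0. Qed.

Lemma Qsqrt1 ps : Qsqrt ps 1.
Proof. exact: Qsqrt_nat ps 1. Qed.

Lemma QsqrtN ps x : Qsqrt ps x -> Qsqrt ps (- x).
Proof.
elim: ps x => [|p ps IH] x /=; first by case=> r ->; exists (- r); rewrite rmorphN.
by case=> a [b [Ha Hb ->]]; exists (- a), (- b); split; [exact: IH | exact: IH | ring].
Qed.

Lemma QsqrtD ps x y : Qsqrt ps x -> Qsqrt ps y -> Qsqrt ps (x + y).
Proof.
elim: ps x y => [|p ps IH] x y /=.
  by case=> r -> [s ->]; exists (r + s); rewrite rmorphD.
case=> a [b [Ha Hb ->]] [a' [b' [Ha' Hb' ->]]].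
by exists (a + a'), (b + b'); split; [exact: IH | exact: IH | ring].
Qed.

Lemma QsqrtB ps x y : Qsqrt ps x -> Qsqrt ps y -> Qsqrt ps (x - y).
Proof. by move=> Hx Hy; apply/QsqrtD/QsqrtN. Qed.

Lemma QsqrtM ps x y : Qsqrt ps x -> Qsqrt ps y -> Qsqrt ps (x * y).
Proof.
elim: ps x y => [|p ps IH] x y /=.
  by case=> r -> [s ->]; exists (r * s); rewrite rmorphM.
case=> a [b [Ha Hb ->]] [a' [b' [Ha' Hb' ->]]].
exists (a * a' + b * b' * p%:R), (a * b' + b * a'); split.
- apply: QsqrtD; first exact: (IH).
  by apply: (IH); [exact: (IH) | exact: Qsqrt_nat].
- by apply: QsqrtD; apply: (IH).
- by rewrite -(sqrtn_sqr p); ring.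
Qed.

Lemma QsqrtX ps x n : Qsqrt ps x -> Qsqrt ps (x ^+ n).
Proof.
by move=> Hx; elim: n => [|n IH]; [rewrite expr0; apply: Qsqrt1 | rewrite exprS; apply: QsqrtM].
Qed.

Lemma Qsqrt_sign ps (c : bool) : Qsqrt ps ((-1) ^+ c).
Proof. exact/QsqrtX/QsqrtN/Qsqrt1. Qed.

#[local] Hint Resolve Qsqrt_rat Qsqrt_nat Qsqrt0 Qsqrt1 QsqrtN QsqrtD QsqrtB QsqrtM QsqrtX
  : Qsqrt.

Lemma Qsqrt_sum ps I (r : seq I) (P : pred I) (F : I -> R) :
  (forall i, P i -> Qsqrt ps (F i)) -> Qsqrt ps (\sum_(i <- r | P i) F i).
Proof. by move=> HF; apply: big_ind => //; [apply: Qsqrt0 | apply: QsqrtD]. Qed.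

Lemma Qsqrt_cons ps p x : Qsqrt ps x -> Qsqrt (p :: ps) x.
Proof. by exists x, 0; rewrite mul0r addr0; split => //; apply: Qsqrt0. Qed.

Lemma Qsqrt_sqrtn ps p : p \in ps -> Qsqrt ps (sqrtn p).
Proof.
elim: ps => [|p' ps IH] //; rewrite inE => /predU1P[->|p_ps]; last exact/Qsqrt_cons/IH.
by exists 0, 1; rewrite mul1r add0r; split; [apply: Qsqrt0 | apply: Qsqrt1 |].
Qed.

Lemma Qsqrt_cons_mem ps p x : p \in ps -> Qsqrt (p :: ps) x -> Qsqrt ps x.
Proof. by move=> p_ps [a [b [Ha Hb ->]]]; apply/QsqrtD/QsqrtM/Qsqrt_sqrtn. Qed.

(* The invariant that carries the induction along the tower. *)
Definition rat_sqrt_multiple (ps : seq nat) (c : R) :=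
  exists t M, [/\ (0 < M)%N, {subset primes M <= ps} & c = ratr t * sqrtn M].

Section QuadraticStep.
Variables (p : nat) (ps : seq nat).
Hypotheses (p_pr : prime p) (p_notin : p \notin ps).
Hypothesis QsqrtV_ps : forall x, Qsqrt ps x -> x != 0 -> Qsqrt ps x^-1.
Hypothesis sqr_rat_ps :
  forall c r, Qsqrt ps c -> c ^+ 2 = ratr r -> rat_sqrt_multiple ps c.

Lemma Qsqrt_sqr_neq_prime c : Qsqrt ps c -> c ^+ 2 != p%:R.
Proof.
move=> Hc; apply/eqP => E.
have [|t [M [M_gt0 sub_M c_eq]]] := sqr_rat_ps (r := p%:R) Hc.
  by rewrite ratr_nat.
have pNM : ~~ (p %| M)%N.
  by apply: contra p_notin => p_M; apply: sub_M; rewrite mem_primes p_pr M_gt0.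
have /eqP[] := @prime_neq_rat_sqr_mul p M t p_pr pNM.
apply: (fmorph_inj (@ratr R)).
by rewrite rmorphM rmorphXn !rmorph_nat -E c_eq exprMn sqrtn_sqr.
Qed.

Lemma sqrtn_notin_Qsqrt : ~ Qsqrt ps (sqrtn p).
Proof. by move/Qsqrt_sqr_neq_prime; rewrite sqrtn_sqr eqxx. Qed.

Lemma Qsqrt_consV x : Qsqrt (p :: ps) x -> x != 0 -> Qsqrt (p :: ps) x^-1.
Proof.
case=> a [b [Ha Hb ->]] x_neq0.
pose N := a ^+ 2 - b ^+ 2 * p%:R.
have QN : Qsqrt ps N by apply/QsqrtB/QsqrtM/Qsqrt_nat; apply: QsqrtX.
have N_neq0 : N != 0.
  apply: contra x_neq0 => /eqP N0.
  have b0 : b = 0.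
    apply/eqP; apply: contraT => b_neq0.
    have /eqP[] := Qsqrt_sqr_neq_prime (QsqrtM Ha (QsqrtV_ps Hb b_neq0)).
    by move/eqP: N0; rewrite subr_eq0 => /eqP N0; rewrite expr_div_n N0; field.
  by move/eqP: N0; rewrite /N b0 expr0n mul0r subr0 sqrf_eq0 => /eqP->; rewrite mul0r addr0.
exists (a / N), (- (b / N)); split.
- exact/QsqrtM/QsqrtV_ps.
- exact/QsqrtN/QsqrtM/QsqrtV_ps.
apply: (mulfI x_neq0); rewrite mulfV //.
by move: N_neq0; rewrite /N -(sqrtn_sqr p) => N_neq0; field; rewrite exprMn.
Qed.

Lemma Qsqrt_cons_sqr_rat c r :
  Qsqrt (p :: ps) c -> c ^+ 2 = ratr r -> rat_sqrt_multiple (p :: ps) c.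
Proof.
case=> a [b [Ha Hb ->]] E.
have E2 : a ^+ 2 + b ^+ 2 * p%:R + 2 * a * b * sqrtn p = ratr r.
  by rewrite -E -(sqrtn_sqr p); ring.
have sub_ps : {subset ps <= p :: ps} by move=> y y_ps; rewrite inE y_ps orbT.
have /eqP : a * b = 0.
  apply/eqP; apply: contraT => ab_neq0; case: sqrtn_notin_Qsqrt.
  have -> : sqrtn p = (ratr r - a ^+ 2 - b ^+ 2 * p%:R) / (2 * a * b).
    by rewrite -E2; field; move: ab_neq0; rewrite mulf_eq0 negb_or andbC.
  apply: QsqrtM; first by auto with Qsqrt.
  by apply: QsqrtV_ps; [auto with Qsqrt | rewrite -mulrA mulf_neq0 ?pnatr_eq0].
rewrite mulf_eq0 => /orP[/eqP a0 | /eqP b0].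
  have p_neq0 : p%:R != 0 :> R by rewrite pnatr_eq0 -lt0n prime_gt0.
  have [|t [M [M_gt0 sub_M ->]]] := sqr_rat_ps (r := r / p%:R) Hb.
    by rewrite fmorph_div /= rmorph_nat -E2 a0; field.
  exists t, (M * p)%N; split; first by rewrite muln_gt0 M_gt0 prime_gt0.
    move=> y; rewrite (primesM _ M_gt0 (prime_gt0 p_pr)) (primes_prime p_pr) => /orP[/sub_M|].
      exact: sub_ps.
    by rewrite inE => /eqP->; rewrite mem_head.
  by rewrite a0 add0r sqrtnM mulrA.
have [|t [M [M_gt0 sub_M ->]]] := sqr_rat_ps (r := r) Ha.
  by rewrite -E2 b0; ring.
by exists t, M; split => //; [move=> y /sub_M; apply: sub_ps | rewrite b0 mul0r addr0].
Qed.

End QuadraticStep.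

Lemma Qsqrt_field ps : all prime ps ->
  (forall x, Qsqrt ps x -> x != 0 -> Qsqrt ps x^-1) /\
  (forall c r, Qsqrt ps c -> c ^+ 2 = ratr r -> rat_sqrt_multiple ps c).
Proof.
elim: ps => [|p ps IH] /=.
  move=> _; split; first by move=> _ [r ->] _; exists r^-1; rewrite fmorphV.
  move=> _ _ [t ->] _; exists t, 1%N; split => //.
  by rewrite /sqrtn sqrtr1 mulr1.
case/andP=> p_pr /IH[QsqrtV_ps sqr_rat_ps].
have [p_ps | p_notin] := boolP (p \in ps).
  split=> [x /(Qsqrt_cons_mem p_ps) Hx /(QsqrtV_ps _ Hx) | c r /(Qsqrt_cons_mem p_ps) Hc].
    exact: Qsqrt_cons.
  case/(sqr_rat_ps _ _ Hc)=> t [M [M_gt0 sub_M ->]].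
  by exists t, M; split=> // y /sub_M y_ps; rewrite inE y_ps orbT.
split; [exact: Qsqrt_consV | exact: Qsqrt_cons_sqr_rat].
Qed.

Lemma QsqrtV ps x : all prime ps -> Qsqrt ps x -> x != 0 -> Qsqrt ps x^-1.
Proof. by case/Qsqrt_field=> QsqrtV_ps _; apply: QsqrtV_ps. Qed.

Lemma sqrtn_prime_notin_Qsqrt ps p :
  all prime ps -> prime p -> p \notin ps -> ~ Qsqrt ps (sqrtn p).
Proof. by move=> /Qsqrt_field[_ sqr_rat_ps] p_pr p_notin; apply: sqrtn_notin_Qsqrt. Qed.

Section Conjugates.
Variables (ps : seq nat) (s : R).
Hypotheses (ps_pr : all prime ps) (Qs2 : Qsqrt ps (s ^+ 2)) (s_notin : ~ Qsqrt ps s).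

(* x and y are exchanged by the automorphism s |-> -s of (Qsqrt ps)(s). *)
Definition conjugates (x y : R) :=
  exists a b, [/\ Qsqrt ps a, Qsqrt ps b, x = a + b * s & y = a - b * s].

Lemma conjugates_refl x : Qsqrt ps x -> conjugates x x.
Proof. by exists x, 0; split; rewrite ?mul0r ?addr0 ?subr0 //; apply: Qsqrt0. Qed.

Lemma conjugatesD x y x' y' :
  conjugates x y -> conjugates x' y' -> conjugates (x + x') (y + y').
Proof.
case=> a [b [Ha Hb -> ->]] [a' [b' [Ha' Hb' -> ->]]].
by exists (a + a'), (b + b'); split; auto with Qsqrt; ring.
Qed.

Lemma conjugatesM x y x' y' :
  conjugates x y -> conjugates x' y' -> conjugates (x * x') (y * y').
Proof.
case=> a [b [Ha Hb -> ->]] [a' [b' [Ha' Hb' -> ->]]].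
by exists (a * a' + b * b' * s ^+ 2), (a * b' + b * a'); split; auto with Qsqrt; ring.
Qed.

Lemma conjugatesX x y n : conjugates x y -> conjugates (x ^+ n) (y ^+ n).
Proof.
move=> Cxy; elim: n => [|n IH]; first by rewrite !expr0; apply/conjugates_refl/Qsqrt1.
by rewrite !exprS; apply: conjugatesM.
Qed.

Lemma conjugates_meval n (P : {mpoly R[n]}) (v v' : 'I_n -> R) :
  (forall m, Qsqrt ps P@_m) -> (forall i, conjugates (v i) (v' i)) ->
  conjugates P.@[v] P.@[v'].
Proof.
move=> QP Cv; rewrite !mevalE.
apply: (big_ind2 conjugates); [exact/conjugates_refl/Qsqrt0 | exact: conjugatesD |].
move=> m _; apply: conjugatesM; first exact: conjugates_refl.
apply: (big_ind2 conjugates); [exact/conjugates_refl/Qsqrt1 | exact: conjugatesM |].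
by move=> i _; apply: conjugatesX.
Qed.

Lemma conjugates_eq0 x y : conjugates x y -> x = 0 -> y = 0.
Proof.
case=> a [b [Ha Hb -> ->]] /eqP; rewrite addr_eq0 => /eqP a_eq.
have [b0 | b_neq0] := eqVneq b 0; first by rewrite a_eq b0 !mul0r oppr0 addr0.
case: s_notin; have -> : s = - a / b by rewrite a_eq opprK [b * s]mulrC mulfK.
by apply: QsqrtM; [apply: QsqrtN | apply: QsqrtV].
Qed.

End Conjugates.

End SqrtField.

Section SignFlips.
Variables (I : finType) (k : I -> nat).
Local Notation pattern := (forall i : I, 'I_(k i) -> bool).

Definition flip (e : pattern) i0 (j0 : 'I_(k i0)) : pattern :=
  fun i j => if (i == i0) && (val j == val j0) then ~~ e i j else e i j.

Arguments flip e i0 j0 : clear implicits.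

Definition hamming (e e' : pattern) : nat :=
  \sum_i \sum_(j < k i) (e i j != e' i j).

Lemma flipK e i0 j0 i j : flip (flip e i0 j0) i0 j0 i j = e i j.
Proof. by rewrite /flip; case: ifP => c; rewrite c ?negbK. Qed.

Lemma hamming_eq0 e e' : (hamming e e' == 0%N) = [forall i, forall j, e i j == e' i j].
Proof.
rewrite sum_nat_eq0; apply: eq_forallb => i.
by rewrite sum_nat_eq0; apply: eq_forallb => j; rewrite eqb0 negbK.
Qed.

Lemma hamming_flip e e' i0 j0 :
  e i0 j0 != e' i0 j0 -> hamming e e' = (hamming (flip e i0 j0) e').+1.
Proof.
move=> e_neq; rewrite /hamming (bigD1 i0) //= [in RHS](bigD1 i0) //= -addSn.
congr (_ + _)%N; last first.
  by apply: eq_bigr => i /negbTE i_neq; apply: eq_bigr => j _; rewrite /flip i_neq.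
rewrite (bigD1 j0) //= [in RHS](bigD1 j0) //= /flip !eqxx e_neq /=.
have -> : (~~ e i0 j0 != e' i0 j0) = false by move: e_neq; case: (e i0 j0); case: (e' i0 j0).
by rewrite add0n add1n; congr _.+1; apply: eq_bigr => j; rewrite val_eqE => /negbTE->.
Qed.

Lemma patterns_flip_closed (Z : pattern -> Prop) :
  (forall e e', (forall i j, e i j = e' i j) -> Z e -> Z e') ->
  (forall e i0 j0, Z e -> Z (flip e i0 j0)) ->
  forall b e, Z b -> Z e.
Proof.
move=> Z_ext Z_flip b e Zb; move: {2}(hamming e b) (erefl (hamming e b)) => n.
elim: n e => [|n IH] e De.
  apply: Z_ext Zb => i j; apply/esym/eqP.
  by move/eqP: De; rewrite hamming_eq0 => /forallP/(_ i)/forallP.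
have : ~~ [forall i, forall j, e i j == b i j] by rewrite -hamming_eq0 De.
rewrite negb_forall => /existsP[i0]; rewrite negb_forall => /existsP[j0 e_neq].
apply: (Z_ext _ _ (flipK e j0)); apply: Z_flip; apply: IH.
by move: De; rewrite (hamming_flip e_neq) => -[].
Qed.
End SignFlips.

Arguments flip {I k} e i0 j0.

Section MpolyMap.
Variables (n : nat) (R : nzRingType).
Implicit Types (P : {mpoly R[n]}).

Lemma eq_mmap (S : nzRingType) (f f' : R -> S) (h h' : 'I_n -> S) P :
  f =1 f' -> h =1 h' -> mmap f h P = mmap f' h' P.
Proof. by move=> ef eh; apply: eq_bigr => m _; rewrite ef (mmap1_eq _ eh). Qed.

Lemma rmorph_mmap (S T : comNzRingType) (phi : {rmorphism S -> T}) (f : R -> S) h P :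
  phi (mmap f h P) = mmap (phi \o f) (phi \o h) P.
Proof.
rewrite rmorph_sum; apply: eq_bigr => m _; rewrite rmorphM rmorph_prod.
by congr (_ * _); apply: eq_bigr => i _; rewrite rmorphXn.
Qed.

Section Univariate.
Variables (A : comNzRingType) (f : R -> A) (c : 'I_n -> A) (i0 : 'I_n).

Definition subst_at (t : A) : 'I_n -> A := fun i => if i == i0 then t else c i.

Definition mmap_poly P : {poly A} :=
  mmap (polyC \o f) (fun i => if i == i0 then 'X else (c i)%:P) P.

Lemma horner_mmap_poly P t : (mmap_poly P).[t] = mmap f (subst_at t) P.
Proof.
rewrite -horner_evalE rmorph_mmap; apply: eq_mmap => [a | i] /=.
  by rewrite horner_evalE hornerC.
by rewrite /subst_at horner_evalE; case: eqP; rewrite ?hornerX ?hornerC.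
Qed.

Lemma size_mmap_poly P d :
  (forall m, m \in msupp P -> (m i0 <= d)%N) -> (size (mmap_poly P) <= d.+1)%N.
Proof.
move=> deg_P; rewrite /mmap_poly /mmap big_seq.
apply: (big_ind (fun u : {poly A} => size u <= d.+1)%N).
- by rewrite size_poly0.
- by move=> u v hu hv; apply: leq_trans (size_polyD u v) _; rewrite geq_max hu hv.
move=> m /deg_P le_m.
have -> : mmap1 (fun i => if i == i0 then 'X else (c i)%:P) m =
          (\prod_(i | i != i0) c i ^+ m i)%:P * 'X^(m i0).
  rewrite /mmap1 (bigD1 i0) //= eqxx mulrC rmorph_prod; congr (_ * _).
  by apply: eq_bigr => i /negbTE ->; rewrite rmorphXn.
rewrite /= mulrA -polyCM mul_polyC (leq_trans (size_scale_leq _ _)) //.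
by rewrite size_polyXn.
Qed.

End Univariate.
End MpolyMap.

Lemma mmap_subst_eq0 (R : nzRingType) n (A : idomainType) (f : R -> A)
    (c : 'I_n -> A) i0 (P : {mpoly R[n]}) d (ys : seq A) t :
  (forall m, m \in msupp P -> (m i0 <= d)%N) -> uniq ys -> (d < size ys)%N ->
  (forall y, y \in ys -> mmap f (subst_at c i0 y) P = 0) ->
  mmap f (subst_at c i0 t) P = 0.
Proof.
move=> deg_P ys_uniq ys_size ys_roots.
rewrite -horner_mmap_poly; suff -> : mmap_poly f c i0 P = 0 by rewrite horner0.
apply: contraTeq ys_size => u_neq0; rewrite -leqNgt -ltnS.
apply: leq_trans (max_poly_roots u_neq0 _ ys_uniq) (size_mmap_poly f c deg_P).
by apply/allP => y /ys_roots; rewrite /root horner_mmap_poly => ->.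
Qed.

Lemma mpoly_grid_eq0 (R : idomainType) n (P : {mpoly R[n]}) (d : 'I_n -> nat)
    (S : 'I_n -> seq R) :
  (forall m, m \in msupp P -> forall i, (m i <= d i)%N) ->
  (forall i, uniq (S i)) -> (forall i, d i < size (S i))%N ->
  (forall x, (forall i, x i \in S i) -> P.@[x] = 0) -> P = 0.
Proof.
move=> deg_P S_uniq S_size P_grid.
(* Keep the variables of index < l and substitute x i for the others; each
   induction step turns one more constant into a variable by root counting. *)
pose partial l x :=
  mmap (@mpolyC n R) (fun i : 'I_n => if (i < l)%N then 'X_i else (x i)%:MP) P.
have partial_eq0 l : (l <= n)%N ->
    forall x, (forall i : 'I_n, (l <= i)%N -> x i \in S i) -> partial l x = 0.
  elim: l => [_ | l IH l_lt_n] x x_S.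
    have -> : partial 0%N x = (P.@[x])%:MP by rewrite /meval rmorph_mmap.
    by rewrite P_grid ?mpolyC0 // => i; apply: x_S.
  pose i0 : 'I_n := Ordinal l_lt_n.
  pose c (i : 'I_n) := if (i < l)%N then 'X_i else (x i)%:MP.
  have -> : partial l.+1 x = mmap (@mpolyC n R) (subst_at c i0 'X_i0) P.
    apply: eq_mmap => // i; rewrite /subst_at /c.
    case: (eqVneq i i0) => [-> | i_neq]; first by rewrite /= ltnSn.
    rewrite ltnS leq_eqVlt (_ : (val i == l) = false) //.
    by apply/negbTE; apply: contra i_neq => /eqP i_l; apply/eqP/val_inj.
  apply: (@mmap_subst_eq0 _ _ _ _ c i0 P (d i0) (map (@mpolyC n R) (S i0))).
  - by move=> m /deg_P.
  - by rewrite map_inj_uniq //; apply: can_inj (@mpolyCK n R).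
  - by rewrite size_map.
  move=> _ /mapP[y y_S ->].
  pose x' (i : 'I_n) := if i == i0 then y else x i.
  rewrite -(IH (ltnW l_lt_n) x'); last first.
    move=> i l_le_i; rewrite /x'; case: (eqVneq i i0) => [-> // | i_neq].
    apply: x_S; rewrite ltn_neqAle l_le_i andbT.
    by apply: contra i_neq => /eqP l_i; apply/eqP/val_inj.
  apply: eq_mmap => // i; rewrite /subst_at /c /x'.
  by case: (eqVneq i i0) => [-> | _] //=; rewrite ltnn.
rewrite -[P]comp_mpoly_id -[RHS](partial_eq0 n (leqnn n) (fun=> 0)).
  by apply: eq_mmap => // i; rewrite tnth_mktuple ltn_ord.
by move=> i; rewrite leqNgt ltn_ord.
Qed.

Lemma pi_val_inj (R : rcfType) k (p : 'I_k -> nat) :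
  (forall j, prime (p j)) -> injective p ->
  forall f f', pi_val R p f = pi_val R p f' -> f =1 f'.
Proof.
move=> p_pr p_inj f f' eq_f j0; apply/eqP/negPn/negP => f_neq.
pose ps := [seq x <- map p (enum 'I_k) | x != p j0].
have ps_pr : all prime ps.
  by apply/allP => x; rewrite mem_filter => /andP[_ /mapP[j _ ->]].
have p_notin : p j0 \notin ps by rewrite mem_filter eqxx.
apply: (@sqrtn_prime_notin_Qsqrt R _ _ ps_pr (p_pr j0) p_notin).
pose c j : R := (-1) ^+ f j - (-1) ^+ f' j.
have c_neq0 : c j0 != 0.
  by rewrite /c; move: f_neq; case: (f j0); case: (f' j0); rewrite //= ?expr1 ?expr0; lra.
have : \sum_j c j * sqrtn R (p j) = 0.
  by rewrite /c; under eq_bigr do rewrite mulrBl; rewrite sumrB -/(pi_val R p f) eq_f subrr.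
rewrite (bigD1 j0) //= => /eqP; rewrite addr_eq0 => /eqP c_s.
have -> : sqrtn R (p j0) = - (\sum_(j | j != j0) c j * sqrtn R (p j)) / c j0.
  by rewrite -c_s mulrC mulKf.
have Qc j : Qsqrt ps (c j) by apply/QsqrtB/Qsqrt_sign/Qsqrt_sign.
apply/QsqrtM/QsqrtV => //; apply/QsqrtN/Qsqrt_sum => j j_neq.
apply/QsqrtM/Qsqrt_sqrtn => //.
by rewrite mem_filter (inj_eq p_inj) j_neq map_f ?mem_enum.
Qed.

Lemma pi_val_bigD1 (R : rcfType) k (j0 : 'I_k) (p : 'I_k -> nat) f :
  pi_val R p f = (-1) ^+ f j0 * sqrtn R (p j0) +
                 \sum_(j < k | j != j0) (-1) ^+ f j * sqrtn R (p j).
Proof. exact: bigD1. Qed.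

Section SignedSums.
Local Unset Implicit Arguments.
Variables (R : rcfType) (q : nat) (Q : {mpoly int[q]}) (d : 'I_q -> nat).
Variable p : forall i : 'I_q, 'I_(klog (d i)) -> nat.
Hypothesis p_pr : forall i j, prime (p i j).
Hypothesis p_inj : forall i j i' j', p i j = p i' j' -> i = i' /\ (j : nat) = (j' : nat).

Local Notation QR := (map_mpoly (fun z : int => z%:~R : R) Q).
Local Notation pattern := (forall i : 'I_q, 'I_(klog (d i)) -> bool).

Definition signed_sums (e : pattern) : 'I_q -> R := fun i => pi_val R (p i) (e i).

Definition primes_but i0 (j0 : 'I_(klog (d i0))) : seq nat :=
  [seq x <- [seq p i j | i <- enum 'I_q, j <- enum 'I_(klog (d i))] | x != p i0 j0].

Lemma primes_but_prime i0 j0 : all prime (primes_but i0 j0).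
Proof.
by apply/allP => x; rewrite mem_filter => /andP[_ /allpairsPdep[i [j [_ _ ->]]]].
Qed.

Lemma p_notin_primes_but i0 j0 : p i0 j0 \notin primes_but i0 j0.
Proof. by rewrite mem_filter eqxx. Qed.

Lemma Qsqrt_primes_but i j i0 j0 :
  (i, val j) != (i0, val j0) -> Qsqrt (primes_but i0 j0) (sqrtn R (p i j)).
Proof.
move=> ij_neq; apply: Qsqrt_sqrtn; rewrite mem_filter.
rewrite (allpairs_f_dep (fun i j => p i j)) ?mem_enum // andbT.
by apply: contra ij_neq => /eqP/p_inj[ei ej]; subst i0; rewrite xpair_eqE eqxx; apply/eqP.
Qed.

Lemma signed_sums_flip_eq0 e i0 j0 :
  QR.@[signed_sums e] = 0 -> QR.@[signed_sums (flip e i0 j0)] = 0.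
Proof.
have s_notin : ~ Qsqrt (primes_but i0 j0) (sqrtn R (p i0 j0)).
  exact: sqrtn_prime_notin_Qsqrt (primes_but_prime i0 j0) (p_pr i0 j0) (p_notin_primes_but i0 j0).
apply: (conjugates_eq0 (primes_but_prime i0 j0) s_notin).
apply: conjugates_meval => [|m|i].
- by rewrite sqrtn_sqr; apply: Qsqrt_nat.
- by rewrite mcoeff_map_mpoly; apply: Qsqrt_int.
rewrite /signed_sums; case: (eqVneq i i0) => [ei | i_neq]; last first.
  rewrite /flip (negbTE i_neq) /=; apply/conjugates_refl/Qsqrt_sum => j _.
  by apply/QsqrtM/Qsqrt_primes_but; [apply: Qsqrt_sign | rewrite xpair_eqE (negbTE i_neq)].
subst i; rewrite !(pi_val_bigD1 R j0) /flip !eqxx /=.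
exists (\sum_(j < klog (d i0) | j != j0) (-1) ^+ e i0 j * sqrtn R (p i0 j)), ((-1) ^+ e i0 j0).
split.
- apply: Qsqrt_sum => j j_neq; apply/QsqrtM/Qsqrt_primes_but; first exact: Qsqrt_sign.
  by rewrite xpair_eqE eqxx.
- exact: Qsqrt_sign.
- by rewrite addrC.
rewrite addrC; congr (_ + _).
  by apply: eq_bigr => j j_neq; rewrite val_eqE (negbTE j_neq).
by case: (e i0 j0); rewrite /= ?expr1 ?expr0 ?mulN1r ?mul1r ?opprK.
Qed.

Lemma signed_sums_eq0 b e : QR.@[signed_sums b] = 0 -> QR.@[signed_sums e] = 0.
Proof.
pose Z (e : pattern) := QR.@[signed_sums e] = 0.
apply: (@patterns_flip_closed _ (fun i => klog (d i)) Z) => [e1 e2 eq_e | ].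
  by rewrite /Z => <-; apply: meval_eq => i; apply: eq_bigr => j _; rewrite eq_e.
exact: signed_sums_flip_eq0.
Qed.

Lemma mpoly_eq0_of_signed_sum_root b :
  deg_bounded Q d -> QR.@[signed_sums b] = 0 -> Q = 0.
Proof.
move=> Q_deg QR_root.
pose S i := codom (fun f : {ffun 'I_(klog (d i)) -> bool} => pi_val R (p i) f).
suff QR0 : QR = 0.
  apply/mpolyP => m; move/(congr1 (mcoeff m)): QR0.
  by rewrite mcoeff_map_mpoly !mcoeff0 => /eqP; rewrite intr_eq0 => /eqP.
apply: (mpoly_grid_eq0 (d := d) (S := S)).
- by move=> m; rewrite (perm_mem (msupp_map_mpoly _ intr_inj)); apply: Q_deg.
- move=> i; rewrite /S codomE map_inj_uniq ?enum_uniq // => f f' /pi_val_inj eq_f.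
  apply/ffunP => j; apply: eq_f => [{}j | j' j'' /(p_inj i j' i j'')[_]]; first exact: p_pr.
  exact: val_inj.
- by move=> i; rewrite /S size_codom card_ffun card_bool card_ord; apply: up_logP.
move=> x x_S; rewrite -(signed_sums_eq0 b (fun i j => iinv (x_S i) j) QR_root).
by apply: meval_eq => i; symmetry; exact: (f_iinv (x_S i)).
Qed.

End SignedSums.

Arguments mpoly_eq0_of_signed_sum_root {R q Q d p}.

Theorem lemma2p1 (R : rcfType) (q : nat) (Q : {mpoly int[q]}) (d : 'I_q -> nat)
  (p : forall i : 'I_q, 'I_(klog (d i)) -> nat)
  (b : forall i : 'I_q, 'I_(klog (d i)) -> bool) :
  deg_bounded Q d ->
  (forall i j, prime (p i j)) ->
  (forall i j i' j', p i j = p i' j' -> i = i' /\ (j : nat) = (j' : nat)) ->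
  (Q != 0) <-> ((map_mpoly (fun z : int => z%:~R : R) Q).@[fun i => @pi_val R _ (p i) (b i)] != 0).
Proof.
move=> Q_deg p_pr p_inj; split; last by apply: contraNneq => ->; rewrite raddf0 meval0 eqxx.
exact/contra_neq/(mpoly_eq0_of_signed_sum_root p_pr p_inj b Q_deg).
Qed.
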